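(* Let $\Gamma_1$ be a connected highly-regular graph which is not distance-regular, and let $\Gamma_2$ be a connected highly-regular graph. Then the Cartesian product $\Gamma_1\Box\Gamma_2$ is a connected highly-regular graph which is not distance-regular.
   Context: The Cartesian product $\Gamma_1\Box\Gamma_2$ has vertex set $V(\Gamma_1)\times V(\Gamma_2)$, with $(u_1,v_1)\sim(u_2,v_2)$ iff ($u_1=u_2$ and $v_1\sim v_2$) or ($v_1=v_2$ and $u_1\sim u_2$). A graph $\Gamma$ of order $n$ is highly-regular with collapsed adjacency matrix $C=[c_{i,j}]_{1\le i,j\le m}$, where $2\le m<n$ (the value $m=n$ allowed only when $n=2$), if for every vertex $u$ there is a partition of $V(\Gamma)$ into nonempty sets $V_1(u)=\{u\},\dots,V_m(u)$ such that every $y\in V_j(u)$ is adjacent to exactly $c_{i,j}$ vertices of $V_i(u)$. A connected graph is distance-regular if for all $u,v$ the numbers $|D_1(v)\cap D_{i-1}(u)|$, $|D_1(v)\cap D_i(u)|$, $|D_1(v)\cap D_{i+1}(u)|$ depend only on $i=d(u,v)$, where $D_i(u)=\{v:d(u,v)=i\}$. *)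

(* Finite simple graphs = symmetric irreflexive relations on a finType. *)
From mathcomp Require Import all_boot.
Unset Printing Implicit Defensive.

Section Graphs.
Variable T : finType.
Implicit Types (e : rel T) (u v : T).

Definition connected_graph e : Prop := forall u v, connect e u v.

Definition walkn e u v (n : nat) : bool :=
  [exists p : n.-tuple T, path e u p && (last u p == v)].

(* D_i(u) = { v : d(u,v) = i } *)
Definition distset e u (i : nat) : {set T} :=
  [set v | walkn e u v i & [forall j : 'I_i, ~~ walkn e u v j]].

(* distance-regular: connected, and |D_1(v) ∩ D_{i-1}(u)|, |D_1(v) ∩ D_i(u)|,
   |D_1(v) ∩ D_{i+1}(u)| depend only on i = d(u,v).
   (For i = 0 we use D_0 in place of D_{-1}; both give 0 since e is irreflexive.) *)
Definition distance_regular e : Prop :=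
  connected_graph e /\
  forall (i : nat) u v u' v',
    v \in distset e u i -> v' \in distset e u' i ->
    [/\ #|distset e v 1 :&: distset e u i.-1| = #|distset e v' 1 :&: distset e u' i.-1|,
        #|distset e v 1 :&: distset e u i| = #|distset e v' 1 :&: distset e u' i|
      & #|distset e v 1 :&: distset e u i.+1| = #|distset e v' 1 :&: distset e u' i.+1|].

(* highly-regular with collapsed adjacency matrix C (indices 1..m are 'I_m, with
   index 1 of the paper being ord 0 here) *)
Definition highly_regular_with e (m : nat) (C : 'I_m -> 'I_m -> nat) : Prop :=
  (2 <= m) && ((m < #|T|) || ((m == #|T|) && (#|T| == 2))) /\
  forall u, exists V : 'I_m -> {set T},
    [/\ forall i : 'I_m, V i != set0,
        forall i : 'I_m, val i = 0 -> V i = [set u],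
        forall x : T, #|[set i | x \in V i]| = 1
      & forall (i j : 'I_m) (y : T), y \in V j -> #|[set x in V i | e y x]| = C i j].

Definition highly_regular e : Prop :=
  exists m (C : 'I_m -> 'I_m -> nat), highly_regular_with e m C.

Definition simple_graph e : Prop := symmetric e /\ irreflexive e.

End Graphs.

Definition cartprod (T1 T2 : finType) (e1 : rel T1) (e2 : rel T2) : rel (T1 * T2) :=
  fun x y => ((x.1 == y.1) && e2 x.2 y.2) || ((x.2 == y.2) && e1 x.1 y.1).
Arguments connected_graph {T} e.
Arguments walkn {T} e u v n.
Arguments distset {T} e u i.
Arguments distance_regular {T} e.
Arguments highly_regular_with {T} e m C.
Arguments highly_regular {T} e.
Arguments simple_graph {T} e.
Arguments cartprod {T1 T2} e1 e2 x y.

From mathcomp Require Import all_boot fingroup perm.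
Set Implicit Arguments. Unset Strict Implicit. Unset Printing Implicit Defensive.

(* Distances add in a Cartesian product, so inside a fibre Gamma1 x {w} the
   distances are those of Gamma1, and the intersection numbers of the product
   at fibre vertices are those of Gamma1 plus (j == i.+1) * deg w; hence a
   distance-regular product would make Gamma1 distance-regular.  Products of
   the highly-regular partitions {V1 i} and {V2 j} are highly-regular
   partitions of the product, with collapsed matrix C1 (x) I + I (x) C2; the
   only case where the product has too many cells, m = n = 2 for Gamma1,
   means Gamma1 = K2, which is distance-regular. *)

Section Walks.
Variable T : finType.
Implicit Types (e : rel T) (u v w x : T).

Lemma walknP e u v n :
  reflect (exists p : seq T, [/\ size p = n, path e u p & last u p = v])
          (walkn e u v n).
Proof.
apply: (iffP existsP) => [[p /andP[Hp /eqP Hl]]|[p [Hs Hp Hl]]].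
  by exists (val p); rewrite size_tuple.
have Hs' : size p == n by rewrite Hs.
by exists (Tuple Hs'); rewrite /= Hp Hl eqxx.
Qed.

Lemma walkn0 e u v : walkn e u v 0 = (u == v).
Proof.
apply/walknP/eqP => [[p [Hs _ Hl]]|->]; last by exists [::].
by case: p Hs Hl => [|x p] //= _ <-.
Qed.

Lemma walkn1 e u v : walkn e u v 1 = e u v.
Proof.
apply/walknP/idP => [[[|x [|y p]] [//= _]]|euv]; first by rewrite andbT => ? <-.
by exists [:: v]; rewrite /= euv.
Qed.

Lemma walknS e u v n : walkn e u v n.+1 = [exists x, e u x && walkn e x v n].
Proof.
apply/walknP/existsP => [[[|x p] [//= [Hs] /andP[ux Hp] Hl]]|].
  by exists x; rewrite ux; apply/walknP; exists p.
by case=> x /andP[ux /walknP[p [Hs Hp Hl]]]; exists (x :: p); rewrite /= Hs ux.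
Qed.

Lemma walkn_cons e u x v n : e u x -> walkn e x v n -> walkn e u v n.+1.
Proof. by move=> eux Hx; rewrite walknS; apply/existsP; exists x; rewrite eux. Qed.

Lemma walkn_cat e u v w m n :
  walkn e u v m -> walkn e v w n -> walkn e u w (m + n).
Proof.
move=> /walknP[p [<- Hp Hl]] /walknP[q [<- Hq Hl']]; apply/walknP.
by exists (p ++ q); rewrite size_cat cat_path last_cat Hl Hp Hq Hl'.
Qed.

Lemma connect_walknP e u v : reflect (exists n, walkn e u v n) (connect e u v).
Proof.
apply: (iffP connectP) => [[p Hp Hl]|[n /walknP[p [_ Hp Hl]]]].
  by exists (size p); apply/walknP; exists p.
by exists p.
Qed.

Lemma distsetP e u v i :
  reflect (walkn e u v i /\ forall j, j < i -> ~~ walkn e u v j)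
          (v \in distset e u i).
Proof.
rewrite inE; apply: (iffP andP) => [[H /forallP F]|[H F]]; split => //.
  by move=> j lt; exact: (F (Ordinal lt)).
by apply/forallP => j; apply: F.
Qed.

Lemma distset_uniq e u v i j :
  v \in distset e u i -> v \in distset e u j -> i = j.
Proof.
move=> /distsetP[Hi Fi] /distsetP[Hj Fj].
case: (ltngtP i j) => // lt; first by move: (Fj i lt); rewrite Hi.
by move: (Fi j lt); rewrite Hj.
Qed.

Lemma distset_memE e u v i j :
  v \in distset e u i -> (v \in distset e u j) = (j == i).
Proof. by move=> Hi; apply/idP/eqP => [/(distset_uniq Hi) ->|->]. Qed.

Lemma distset0 e u v : (v \in distset e u 0) = (u == v).
Proof. by apply/distsetP/idP => [[]|]; rewrite walkn0. Qed.

Lemma distset1 e u v : irreflexive e -> (v \in distset e u 1) = e u v.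
Proof.
move=> irr; apply/distsetP/idP => [[]|euv]; first by rewrite walkn1.
split=> [|[]//]; first by rewrite walkn1.
by rewrite walkn0 => _; apply/eqP => uv; move: euv; rewrite uv irr.
Qed.

Lemma connect_distset e u v : connect e u v -> exists i, v \in distset e u i.
Proof.
move=> /connect_walknP ex; exists (ex_minn ex); apply/distsetP.
case: ex_minnP => i Hi Hmin; split=> // j lt_ji; apply/negP => Hj.
by have := Hmin j Hj; rewrite leqNgt lt_ji.
Qed.

End Walks.

Lemma walkn_homo (T T' : finType) (e : rel T) (e' : rel T') (f : T -> T') u v n :
  {homo f : x y / e x y >-> e' x y} -> walkn e u v n -> walkn e' (f u) (f v) n.
Proof.
move=> f_homo /walknP[p [Hs Hp Hl]]; apply/walknP; exists (map f p).
by rewrite size_map (homo_path f_homo Hp) last_map Hl.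
Qed.

Lemma card_set_andb (T : finType) (A : {set T}) (b : bool) :
  #|[set x in A | b]| = b * #|A|.
Proof.
case: b; rewrite ?mul1n ?mul0n; first by apply: eq_card => x; rewrite inE andbT.
by apply: eq_card0 => x; rewrite inE andbF.
Qed.

Section Automorphisms.
Variables (T : finType) (e : rel T).

Definition distance_transitive : Prop :=
  forall i u v u' v', v \in distset e u i -> v' \in distset e u' i ->
  exists f : {perm T}, [/\ {mono f : x y / e x y}, f u = u' & f v = v'].

Lemma walkn_perm (f : {perm T}) u v n : {mono f : x y / e x y} ->
  walkn e (f u) (f v) n = walkn e u v n.
Proof.
move=> f_mono; apply/idP/idP; last by apply: walkn_homo => x y; rewrite f_mono.
rewrite -{2}(permK f u) -{2}(permK f v); apply: walkn_homo => x y.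
by rewrite -(f_mono (f^-1%g x)) !permKV.
Qed.

Lemma distset_perm (f : {perm T}) u i : {mono f : x y / e x y} ->
  distset e (f u) i = f @: distset e u i.
Proof.
move=> f_mono; apply/setP => x.
rewrite -[x](permKV f) mem_imset; last exact: perm_inj.
rewrite !inE walkn_perm //; congr andb; apply: eq_forallb => j.
by rewrite walkn_perm.
Qed.

Lemma distance_transitive_regular :
  connected_graph e -> distance_transitive -> distance_regular e.
Proof.
move=> conn dt; split=> // i u v u' v' Hv Hv'.
have [f [f_mono <- <-]] := dt i u v u' v' Hv Hv'.
by rewrite !distset_perm // -!(imsetI (in2W perm_inj)) !(card_imset _ perm_inj).
Qed.

End Automorphisms.

Lemma card2_neq (T : finType) (x y z : T) :
  #|T| = 2 -> x != z -> y != z -> x = y.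
Proof.
move=> cardT xz yz; have : y \in [set z; x].
  suff -> : [set z; x] = setT by rewrite inE.
  by apply/eqP; rewrite eqEcard subsetT cardsT cards2 eq_sym xz cardT.
by rewrite !inE (negPf yz) => /eqP.
Qed.

Section TwoVertices.
Variables (T : finType) (e : rel T).
Hypotheses (simple : simple_graph e) (conn : connected_graph e) (cardT : #|T| = 2).

Lemma card2_edge u v : e u v = (u != v).
Proof.
have [_ irr] := simple; apply/idP/idP => [euv|uv].
  by apply: contraTneq euv => ->; rewrite irr.
case/connectP: (conn u v) => [[|x p]] /=.
  by move=> _ uv'; rewrite uv' eqxx in uv.
case/andP=> eux _ _; have xu : x != u by apply: contraTneq eux => ->; rewrite irr.
by rewrite (card2_neq cardT (_ : v != u) xu) // eq_sym.
Qed.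

(* Any permutation is an automorphism of K2; the transposition (u u') does the job. *)
Lemma card2_distance_transitive : distance_transitive e.
Proof.
have at_center a b i : b \in distset e a i -> (b == a) = (i == 0).
  by move=> Hb; rewrite eq_sym -(distset0 e) (distset_memE _ Hb).
move=> i u v u' v' Hv Hv'; exists (tperm u u'); split; last 2 first.
- exact: tpermL.
- have : (v == u) = (v' == u') by rewrite (at_center _ _ _ Hv) (at_center _ _ _ Hv').
  case: (eqVneq v u) => [-> /esym/eqP ->|vu v'u']; first exact: tpermL.
  apply: (card2_neq (z := u') cardT).
    by rewrite -{2}(tpermL u u') (inj_eq perm_inj).
  by rewrite -v'u'.
by move=> x y; rewrite !card2_edge (inj_eq perm_inj).
Qed.

End TwoVertices.

Section CartesianProduct.
Variables (T1 T2 : finType) (e1 : rel T1) (e2 : rel T2).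
Local Notation G := (cartprod e1 e2).

Lemma cartprod_irr : irreflexive e1 -> irreflexive e2 -> irreflexive G.
Proof. by move=> irr1 irr2 [x1 x2]; rewrite /cartprod /= irr1 irr2 !andbF. Qed.

Lemma walkn_cartprodl a b w n : walkn e1 a b n -> walkn G (a, w) (b, w) n.
Proof.
apply: (walkn_homo (f := fun x => (x, w))) => x y exy.
by rewrite /cartprod /= eqxx exy orbT.
Qed.

Lemma walkn_cartprodr w a b n : walkn e2 a b n -> walkn G (w, a) (w, b) n.
Proof.
apply: (walkn_homo (f := pair w)) => x y exy.
by rewrite /cartprod /= eqxx exy.
Qed.

Lemma walkn_cartprod_split a1 a2 b1 b2 n :
  walkn G (a1, a2) (b1, b2) n -> exists n1 n2,
  [/\ n1 + n2 = n, walkn e1 a1 b1 n1 & walkn e2 a2 b2 n2].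
Proof.
elim: n a1 a2 => [|n IHn] a1 a2.
  by rewrite walkn0 => /eqP[-> ->]; exists 0, 0; rewrite !walkn0 !eqxx.
rewrite walknS => /existsP[[x1 x2] /andP[Gax /IHn[n1 [n2 [<- H1 H2]]]]].
case/orP: Gax => /andP[/eqP /= ax ex].
  by exists n1, n2.+1; rewrite addnS ax H1 (walkn_cons ex H2).
by exists n1.+1, n2; rewrite addSn ax H2 (walkn_cons ex H1).
Qed.

Lemma distset_cartprod u1 u2 x1 x2 i1 i2 :
  x1 \in distset e1 u1 i1 -> x2 \in distset e2 u2 i2 ->
  (x1, x2) \in distset G (u1, u2) (i1 + i2).
Proof.
move=> /distsetP[H1 F1] /distsetP[H2 F2]; apply/distsetP; split.
  exact: walkn_cat (walkn_cartprodl _ H1) (walkn_cartprodr _ H2).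
move=> k lt_k; apply/negP => /walkn_cartprod_split[n1 [n2 [Ek Hn1 Hn2]]].
have [lt1|] := ltnP n1 i1; first by move: (F1 _ lt1); rewrite Hn1.
rewrite -(leq_add2r n2) Ek => /(leq_ltn_trans)/(_ lt_k); rewrite ltn_add2l => lt2.
by move: (F2 _ lt2); rewrite Hn2.
Qed.

Lemma cartprod_connected :
  connected_graph e1 -> connected_graph e2 -> connected_graph G.
Proof.
move=> c1 c2 [u1 u2] [v1 v2].
have [i1 H1] := connect_distset (c1 u1 v1); have [i2 H2] := connect_distset (c2 u2 v2).
by apply/connect_walknP; exists (i1 + i2); case/distsetP: (distset_cartprod H1 H2).
Qed.

Lemma card_cartprod_nbhd (S : {set T1 * T2}) y : irreflexive e1 ->
  #|[set x in S | G y x]| =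
  #|[set x1 | e1 y.1 x1 & (x1, y.2) \in S]| + #|[set x2 | e2 y.2 x2 & (y.1, x2) \in S]|.
Proof.
case: y => y1 y2 irr1 /=.
set A := [set x1 | _ & _]; set B := [set x2 | _ & _].
have -> : [set x in S | G (y1, y2) x] = setX A [set y2] :|: setX [set y1] B.
  apply/setP => -[x1 x2]; rewrite !inE /cartprod /=.
  rewrite andb_orr orbC; congr orb.
    by case: (eqVneq x2 y2) => [->|_] /=; rewrite ?andbF // andbT andbC.
  by case: (eqVneq x1 y1) => [->|_] /=; rewrite ?andbF // andbC.
rewrite cardsU; have -> : setX A [set y2] :&: setX [set y1] B = set0.
  apply/setP => -[x1 x2]; rewrite !inE /=.
  by case: (eqVneq x1 y1) => [->|]; rewrite ?irr1 ?andbF.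
by rewrite cards0 subn0 !cardsX !cards1 muln1 mul1n.
Qed.

Section Fibres.
Hypotheses (irr1 : irreflexive e1) (irr2 : irreflexive e2) (conn1 : connected_graph e1).

Lemma distset_cartprod_fibre u x w j :
  ((x, w) \in distset G (u, w) j) = (x \in distset e1 u j).
Proof.
have [i Hx] := connect_distset (conn1 u x).
have Hw : w \in distset e2 w 0 by rewrite distset0.
by rewrite (distset_memE _ Hx) (distset_memE _ (distset_cartprod Hx Hw)) addn0.
Qed.

Lemma cartprod_intersection_number u v w i j : v \in distset e1 u i ->
  #|distset G (v, w) 1 :&: distset G (u, w) j| =
  #|distset e1 v 1 :&: distset e1 u j| + (j == i.+1) * #|distset e2 w 1|.
Proof.
move=> Hv.
have -> : distset G (v, w) 1 :&: distset G (u, w) j =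
          [set x in distset G (u, w) j | G (v, w) x].
  apply/setP => x.
  by rewrite in_setI in_set (distset1 _ _ (cartprod_irr irr1 irr2)) andbC.
rewrite card_cartprod_nbhd //=; congr (_ + _).
  by apply: eq_card => x; rewrite in_setI in_set distset_cartprod_fibre distset1.
rewrite -card_set_andb; apply: eq_card => x; rewrite in_set [RHS]in_set distset1 //.
apply: andb_id2l => ewx; have Hx : x \in distset e2 w 1 by rewrite distset1.
by rewrite (distset_memE _ (distset_cartprod Hv Hx)) addn1.
Qed.

Lemma cartprod_distance_regular_factor (w : T2) :
  distance_regular G -> distance_regular e1.
Proof.
move=> [_ drG]; split=> // i u v u' v' Hv Hv'.
have := drG i (u, w) (v, w) (u', w) (v', w).
rewrite !distset_cartprod_fibre => /(_ Hv Hv').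
rewrite !(cartprod_intersection_number _ _ Hv) !(cartprod_intersection_number _ _ Hv').
by case=> /addIn-> /addIn-> /addIn->.
Qed.

End Fibres.
End CartesianProduct.

Section OrdinalDivMod.
Variables m1 m2 : nat.
Implicit Types k : 'I_(m1 * m2).

Lemma ord_mul_gt0 k : 0 < m2.
Proof. by case: k => n; case: posnP => // ->; rewrite muln0. Qed.

Lemma ord_div_subproof k : k %/ m2 < m1.
Proof. by rewrite ltn_divLR ?(ord_mul_gt0 k). Qed.

Lemma ord_mod_subproof k : k %% m2 < m2.
Proof. by rewrite ltn_pmod ?(ord_mul_gt0 k). Qed.

Definition ord_div k : 'I_m1 := Ordinal (ord_div_subproof k).
Definition ord_mod k : 'I_m2 := Ordinal (ord_mod_subproof k).

Lemma ord_divmod_inj k k' :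
  ord_div k = ord_div k' -> ord_mod k = ord_mod k' -> k = k'.
Proof.
move=> /(congr1 val) /= Ediv /(congr1 val) /= Emod; apply: val_inj => /=.
by rewrite (divn_eq k m2) (divn_eq k' m2) Ediv Emod.
Qed.

Lemma ord_divmod_surj (i : 'I_m1) (j : 'I_m2) :
  exists k, ord_div k = i /\ ord_mod k = j.
Proof.
have m2_gt0 : 0 < m2 by apply: leq_ltn_trans (ltn_ord j).
have lt_k : i * m2 + j < m1 * m2.
  by rewrite -ltn_divLR // divnMDl // divn_small // addn0.
exists (Ordinal lt_k); split; apply: val_inj => /=.
  by rewrite divnMDl // divn_small // addn0.
by rewrite modnMDl modn_small.
Qed.

End OrdinalDivMod.

Definition collapsed_partition (T : finType) (e : rel T) m
    (C : 'I_m -> 'I_m -> nat) (u : T) (V : 'I_m -> {set T}) : Prop :=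
  [/\ forall i : 'I_m, V i != set0,
      forall i : 'I_m, val i = 0 -> V i = [set u],
      forall x : T, #|[set i | x \in V i]| = 1
    & forall (i j : 'I_m) (y : T), y \in V j -> #|[set x in V i | e y x]| = C i j].

Lemma class_memE (I T : finType) (V : I -> {set T}) x a b :
  (forall x, #|[set i | x \in V i]| = 1) -> x \in V a -> (x \in V b) = (b == a).
Proof.
move=> classes Ha; have /eqP/cards1P[c Ec] := classes x.
have memE i : (x \in V i) = (i == c) by rewrite -in_set1 -Ec inE.
by move: Ha; rewrite !memE => /eqP->.
Qed.

(* C1 (x) I + I (x) C2, where k : 'I_(m1 * m2) stands for the pair (k %/ m2, k %% m2). *)
Definition cartprod_collapsed m1 m2 (C1 : 'I_m1 -> 'I_m1 -> nat)
    (C2 : 'I_m2 -> 'I_m2 -> nat) (k l : 'I_(m1 * m2)) : nat :=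
  (ord_mod k == ord_mod l) * C1 (ord_div k) (ord_div l) +
  (ord_div k == ord_div l) * C2 (ord_mod k) (ord_mod l).

Lemma cartprod_collapsed_partition (T1 T2 : finType) (e1 : rel T1) (e2 : rel T2)
    m1 m2 C1 C2 u1 u2 (V1 : 'I_m1 -> {set T1}) (V2 : 'I_m2 -> {set T2}) :
  irreflexive e1 ->
  collapsed_partition e1 C1 u1 V1 -> collapsed_partition e2 C2 u2 V2 ->
  collapsed_partition (cartprod e1 e2) (cartprod_collapsed C1 C2) (u1, u2)
    (fun k => setX (V1 (ord_div k)) (V2 (ord_mod k))).
Proof.
move=> irr1 [nz1 root1 cls1 nbr1] [nz2 root2 cls2 nbr2]; split.
- move=> k.
  have [/set0Pn[x1 Hx1] /set0Pn[x2 Hx2]] := (nz1 (ord_div k), nz2 (ord_mod k)).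
  by apply/set0Pn; exists (x1, x2); rewrite in_setX Hx1 Hx2.
- move=> k k0; rewrite root1 ?root2 /= ?k0 ?div0n ?mod0n //.
  by apply/setP => -[x1 x2]; rewrite in_setX !inE xpair_eqE.
- move=> [x1 x2].
  have /eqP/cards1P[a Ea] := cls1 x1; have /eqP/cards1P[b Eb] := cls2 x2.
  have [Ha Hb] : x1 \in V1 a /\ x2 \in V2 b.
    by split; [move: (set11 a); rewrite -Ea | move: (set11 b); rewrite -Eb];
       rewrite inE.
  have [k [Ediv Emod]] := ord_divmod_surj a b.
  apply/eqP/cards1P; exists k; apply/setP => l.
  rewrite !inE /= (class_memE _ cls1 Ha) (class_memE _ cls2 Hb) -Ediv -Emod.
  apply/andP/eqP => [[/eqP ? /eqP ?]|->]; [exact: ord_divmod_inj | by rewrite !eqxx].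
move=> k l [y1 y2]; rewrite in_setX => /andP[Hy1 Hy2].
rewrite card_cartprod_nbhd //=; congr (_ + _).
  rewrite -(nbr1 _ _ _ Hy1) -card_set_andb; apply: eq_card => x.
  by rewrite !inE /= (class_memE _ cls2 Hy2) andbA (andbC (e1 y1 x)).
rewrite -(nbr2 _ _ _ Hy2) -card_set_andb; apply: eq_card => x.
by rewrite !inE /= (class_memE _ cls1 Hy1) andbCA andbC (andbC (e2 y2 x)).
Qed.

Lemma highly_regular_with_card (T : finType) (e : rel T) m C :
  highly_regular_with e m C -> 2 <= m <= #|T|.
Proof.
move=> [/andP[-> size_m] _] /=.
by case/orP: size_m => [/ltnW|/andP[/eqP-> _]].
Qed.

Lemma highly_regular_with_ltn_card (T : finType) (e : rel T) m C :
  simple_graph e -> connected_graph e -> ~ distance_regular e ->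
  highly_regular_with e m C -> m < #|T|.
Proof.
move=> simple conn not_dr [/andP[_ size_m] _].
case/orP: size_m => [//|/andP[_ /eqP cardT]].
exfalso; apply: not_dr (distance_transitive_regular conn _).
exact: card2_distance_transitive simple conn cardT.
Qed.

Lemma cartprod_highly_regular_with (T1 T2 : finType) (e1 : rel T1) (e2 : rel T2)
    m1 m2 C1 C2 :
  irreflexive e1 -> highly_regular_with e1 m1 C1 -> m1 < #|T1| ->
  highly_regular_with e2 m2 C2 ->
  highly_regular_with (cartprod e1 e2) (m1 * m2) (cartprod_collapsed C1 C2).
Proof.
move=> irr1 hr1 lt_m1 hr2.
have /andP[m1_ge2 _] := highly_regular_with_card hr1.
have /andP[m2_ge2 m2_le] := highly_regular_with_card hr2.
split.
  have lt_card : m1 * m2 < #|{: T1 * T2}|.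
    by rewrite card_prod (ltn_mull (leq_trans (ltnW m2_ge2) m2_le) lt_m1 m2_le).
  by rewrite lt_card andbT (leq_trans _ (leq_mul m1_ge2 m2_ge2)).
move=> [u1 u2]; have [_ /(_ u1)[V1 P1]] := hr1; have [_ /(_ u2)[V2 P2]] := hr2.
by eexists; exact: cartprod_collapsed_partition irr1 P1 P2.
Qed.

Theorem propositionA2 (T1 T2 : finType) (e1 : rel T1) (e2 : rel T2) :
  simple_graph e1 -> simple_graph e2 ->
  connected_graph e1 -> highly_regular e1 -> ~ distance_regular e1 ->
  connected_graph e2 -> highly_regular e2 ->
  [/\ connected_graph (cartprod e1 e2), highly_regular (cartprod e1 e2)
    & ~ distance_regular (cartprod e1 e2)].
Proof.
move=> simple1 [_ irr2] conn1 [m1 [C1 hr1]] not_dr1 conn2 [m2 [C2 hr2]].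
have [_ irr1] := simple1.
have lt_m1 := highly_regular_with_ltn_card simple1 conn1 not_dr1 hr1.
split; first exact: cartprod_connected.
  exists (m1 * m2), (cartprod_collapsed C1 C2).
  exact: cartprod_highly_regular_with irr1 hr1 lt_m1 hr2.
have /andP[m2_ge2 m2_le] := highly_regular_with_card hr2.
have /card_gt0P[w _] : 0 < #|T2| by apply: leq_trans (ltnW m2_ge2) m2_le.
by move=> /(cartprod_distance_regular_factor irr1 irr2 conn1 w).
Qed.
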